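(* Let $Q_{n,m}$ be as defined in the context and let $S$ be a nonzero subspace of $V(Q_{n,m})$. Then every coloring of the induced subgraph $Q_{n,m}|_S$ contains a code of dimension at most $\left\lceil (\dim(S^\perp)+1)/m\right\rceil$, where $S^\perp$ is the orthogonal complement of $S$ in $V(Q_{n,m})$.
   Context: A quantum graph $G$ consists of a finite-dimensional complex inner product space $V(G)$ and a real vector space $E(G)$ of self-adjoint operators on $V(G)$ containing the identity $I$; write $|G|=\dim V(G)$ and $\|G\|=\dim E(G)-1$. A code of $G$ is a subspace $C\subseteq V(G)$ such that there is a function $\epsilon_C:E(G)\to\mathbb{R}$ with $P_CAP_C=\epsilon_C(A)P_C$ for all $A\in E(G)$, where $P_C$ is the orthogonal projection onto $C$. A coloring of $G$ is a set $K$ of codes of $G$ with $\sum_{C\in K}P_C=I$. For a subspace $S\subseteq V(G)$, the induced subgraph $G|_S$ is the quantum graph with $V(G|_S)=S$ and $E(G|_S)=P_SE(G)P_S$ (operators restricted to $S$). Let $n\ge 2$ and $1\le m\le n-1$ be integers. $Q_{n,m}$ denotes any quantum graph with $|Q_{n,m}|=n$, $\|Q_{n,m}\|=m$, such that: (i) $E(Q_{n,m})$ is commutative; (ii) (tropical) $E(Q_{n,m})$ has a basis $\{I,A_1,\dots,A_m\}$ and there is an orthonormal basis of $V(Q_{n,m})$ of common eigenvectors of the $A_i$ such that, writing the eigenvalues of $A_i$ in decreasing order $\lambda_{i,1},\dots,\lambda_{i,n}$ with corresponding common eigenvectors $w_{i,1},\dots,w_{i,n}$, one has $0<\lambda_{i,j+1}<\lambda_{i,j}/n^2$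 for all $i$ and $1\le j<n$; (iii) (cyclical) for $1\le i<m$ and all $j$, $w_{i+1,j}=w_{i,j+s_i}$, with the second index taken modulo $n$ in $\{1,\dots,n\}$, where $s_i=\lfloor n/m\rfloor+1$ if $1\le i\le (n\bmod m)$ and $s_i=\lfloor n/m\rfloor$ otherwise; (iv) the common eigenvectors are enumerated as $w_1,\dots,w_n$ (each common eigenvector exactly once) so that for every $l\in\{1,\dots,n\}$ one has $w_l=w_{i,\lceil l/m\rceil}$ for some $i\in\{1,\dots,m\}$. *)

(* Quantum graphs realised inside C^n (row vectors,
   operators act on the right: v |-> v *m X), over an arbitrary
   numClosedFieldType C (e.g. the complex numbers). *)
From HB Require Import structures.
From mathcomp Require Import all_boot all_order all_algebra.
From mathcomp Require Import sesquilinear spectral.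
Set Implicit Arguments. Unset Strict Implicit. Unset Printing Implicit Defensive.
Import Order.TTheory GRing.Theory Num.Theory.
Local Open Scope ring_scope.

Definition adj (C : numClosedFieldType) p q (X : 'M[C]_(p, q)) : 'M[C]_(q, p) :=
  map_mx Num.conj (X^T).

Section QG.
Variables (C : numClosedFieldType) (n : nat).
Definition selfadj (X : 'M[C]_n) : Prop := adj X = X.

Definition oproj (U : 'M[C]_n) : 'M[C]_n := proj_ortho U.

Definition ocompl (S : 'M[C]_n) : 'M[C]_n :=
  orthomx Num.conj (mx_of_hermitian (hermitian1mx _)) S.

(* A quantum graph is represented by a subspace V of C^n (its vertex space)
   and a set E of operators; operators on V are represented by operators on
   C^n vanishing on V^perp, and the identity of V by oproj V. *)

Definition is_code (V : 'M[C]_n) (E : 'M[C]_n -> Prop) (Cs : 'M[C]_n) : Prop :=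
  (Cs <= V)%MS /\
  forall X, E X -> exists e : C, e \is Num.real /\
     oproj Cs *m X *m oproj Cs = e *: oproj Cs.

Definition is_coloring (V : 'M[C]_n) (E : 'M[C]_n -> Prop) (K : seq 'M[C]_n) : Prop :=
  (forall Cs, Cs \in K -> is_code V E Cs) /\
  \sum_(Cs <- K) oproj Cs = oproj V.

Definition induced_E (S : 'M[C]_n) (E : 'M[C]_n -> Prop) : 'M[C]_n -> Prop :=
  fun Y => exists X, E X /\ Y = oproj S *m X *m oproj S.

Definition rspan m (A : 'I_m -> 'M[C]_n) : 'M[C]_n -> Prop :=
  fun X => exists (c0 : C) (c : 'I_m -> C),
    c0 \is Num.real /\ (forall i, c i \is Num.real) /\
    X = c0%:M + \sum_(i < m) c i *: A i.

Definition rindep m (A : 'I_m -> 'M[C]_n) : Prop :=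
  forall (c0 : C) (c : 'I_m -> C),
    c0 \is Num.real -> (forall i, c i \is Num.real) ->
    c0%:M + \sum_(i < m) c i *: A i = 0 -> c0 = 0 /\ forall i, c i = 0.
End QG.

(* the shift s_i for 0-based index i (paper's index i+1) *)
Definition shift (n m i : nat) : nat :=
  (if i < n %% m then n %/ m + 1 else n %/ m)%N.

Definition ceildiv (a b : nat) : nat := ((a + b.-1) %/ b)%N.

(* Suppose every code of the colouring has dimension greater than
   d = ceil((c+1)/m), where c = dim S^perp, and put mu_i = lam_{i,d}
   (eigenvalues of A_i in decreasing order, counted from 1) and
   Phi = sum_i tr(P_S A_i) / mu_i.
   On a code Cs the compression P_Cs A_i P_Cs is a scalar e, and since
   dim Cs > d, Cs contains a vector orthogonal to the d leading eigenvectors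
   of A_i, whence e <= lam_{i,d+1} <= mu_i / n^2.  Summing over the colouring
   gives n^2 Phi <= m tr(P_S) <= m n.
   On the other hand S meets span(w_1, ..., w_{c+1}) in some u <> 0; by the
   enumeration (iv) each such w_l is an eigenvector w_{i,k} of some A_i with
   k <= d, so lam_{i,k} >= mu_i, and Cauchy-Schwarz gives |u|^2 <= |u|^2 Phi.
   Thus n^2 <= m n, contradicting m < n. *)

From HB Require Import structures.
From mathcomp Require Import all_boot all_order all_algebra.
From mathcomp Require Import sesquilinear spectral.
From mathcomp Require Import zify.
Import Order.TTheory GRing.Theory Num.Theory.
Local Open Scope ring_scope.
Local Open Scope sesquilinear_scope.

Set Implicit Arguments.
Unset Strict Implicit.
Unset Printing Implicit Defensive.

Lemma trmxC_mul (C : numClosedFieldType) p q r (X : 'M[C]_(p, q)) (Y : 'M[C]_(q, r)) :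
  (X *m Y)^t* = Y^t* *m X^t*.
Proof. by rewrite trmx_mul map_mxM. Qed.

Section OrthogonalProjection.
Variables (C : numClosedFieldType) (n : nat).
Implicit Types (U : 'M[C]_n) (x y : 'rV[C]_n).
Local Notation "''[' u , v ]" := (@dotmx C n u v) : ring_scope.
Local Notation "''[' u ]" := (@dotmx C n u u) : ring_scope.
Local Notation "B ^!" := (orthomx Num.conj (mx_of_hermitian (hermitian1mx _)) B).

Lemma oproj_sub U : (oproj U <= U)%MS.
Proof. by rewrite -[oproj U]mul1mx proj_ortho_sub. Qed.

Lemma oproj_idem U : oproj U *m oproj U = oproj U.
Proof. exact: proj_ortho_proj. Qed.

(* [P] and [1 - P] have orthogonal ranges, i.e. [P (1 - P)^t* = 0]. *)
Lemma trmxC_oproj U : (oproj U)^t* = oproj U.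
Proof.
set P := oproj U.
have compl_ortho : (P <= (1%:M - P)^!)%MS.
  apply: submx_trans (oproj_sub U) _; rewrite orthomx_sym.
  by have := proj_ortho_compl_sub U 1%:M; rewrite mul1mx.
have P_PtC : P = P *m P^t*.
  move/orthomx1P: compl_ortho; rewrite linearB /= map_mxB trmx1 map_mx1.
  by rewrite mulmxBr mulmx1 => /eqP; rewrite subr_eq0 => /eqP.
by rewrite P_PtC trmxC_mul trmxCK.
Qed.

Lemma oproj_mulmx_sub U V : (U <= V)%MS -> oproj U *m oproj V = oproj U.
Proof. by move=> sUV; apply: proj_ortho_id; apply: submx_trans (oproj_sub U) sUV. Qed.

Lemma mulmx_oproj_sub U V : (U <= V)%MS -> oproj V *m oproj U = oproj U.
Proof.
by move=> sUV; rewrite -[LHS]trmxCK trmxC_mul !trmxC_oproj oproj_mulmx_sub // trmxC_oproj.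
Qed.

Lemma dotmx_oprojl U x y : '[x *m oproj U, y] = '[x, y *m oproj U].
Proof. by rewrite !dotmxE trmxC_mul trmxC_oproj mulmxA. Qed.

Lemma dotmx_oproj U x : '[x *m oproj U, x] = '[x *m oproj U].
Proof. by rewrite dotmx_oprojl -{1}oproj_idem mulmxA dotmx_oprojl -mulmxA oproj_idem. Qed.

Lemma dnorm_oproj_le U x : '[x *m oproj U] <= '[x].
Proof.
set y := x *m oproj U.
have y_ortho : '[y, x - y] = 0.
  by rewrite /y dotmx_oprojl mulmxBl -mulmxA oproj_idem subrr linear0r.
have -> : '[x] = '[y + (x - y)] by rewrite addrC subrK.
by rewrite dnormD /= y_ortho conjC0 !addr0 lerDl dnorm_ge0.
Qed.

Lemma exists_orthogonal_in p (v : 'I_p -> 'rV[C]_n) U :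
  (p < \rank U)%N -> exists x, [/\ x != 0, (x <= U)%MS & forall k, '[x, v k] = 0].
Proof.
move=> ltpU; set B := \matrix_(k < p) v k.
have := mxrank_sum_cap U B^!; have := rank_leq_col (U + B^!)%MS.
have := add_rank_ortho B; have := rank_leq_row B => ? ? ? ?.
have /rowV0Pn [x /[dup] sxU /(submx_trans)/(_ (capmxSr _ _)) sxB nzx] : (U :&: B^! != 0)%MS.
  by rewrite -mxrank_eq0 -lt0n; lia.
exists x; split => //; first exact: submx_trans sxU (capmxSl _ _).
move=> k; have /submxP [y ->] : (v k <= B)%MS by rewrite -(rowK v k) row_sub.
by rewrite dotmxE trmxC_mul mulmxA (orthomx1P sxB) mul0mx mxE.
Qed.

Lemma exists_orthogonal_tail (w : 'I_n -> 'rV[C]_n) U c : (n - c.+1 < \rank U)%N ->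
  exists x, [/\ x != 0, (x <= U)%MS & forall l : 'I_n, (c < l)%N -> '[x, w l] = 0].
Proof.
move=> ltnUc; have tail_lt (k : 'I_(n - c.+1)) : (c.+1 + k < n)%N.
  by have := ltn_ord k; lia.
have [x [nz_x sxU x_tail]] := exists_orthogonal_in (fun k => w (Ordinal (tail_lt k))) ltnUc.
exists x; split => // l ltcl; have lc_lt : (l - c.+1 < n - c.+1)%N by have := ltn_ord l; lia.
by have := x_tail (Ordinal lc_lt); congr ('[x, w _] = 0); apply: val_inj => /=; lia.
Qed.
End OrthogonalProjection.

Section CompressedOperator.
Variables (C : numClosedFieldType) (n : nat) (S Cs X : 'M[C]_n) (e : C).
Local Notation "''[' u , v ]" := (@dotmx C n u v) : ring_scope.
Local Notation "''[' u ]" := (@dotmx C n u u) : ring_scope.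

Lemma compress_induced : (Cs <= S)%MS ->
  oproj Cs *m (oproj S *m X *m oproj S) *m oproj Cs = e *: oproj Cs ->
  oproj Cs *m X *m oproj Cs = e *: oproj Cs.
Proof.
move=> sCS <-.
rewrite (mulmxA (oproj Cs) _ (oproj S)) (mulmxA (oproj Cs) (oproj S)).
by rewrite oproj_mulmx_sub // -(mulmxA _ (oproj S)) mulmx_oproj_sub.
Qed.

Hypothesis compressX : oproj Cs *m X *m oproj Cs = e *: oproj Cs.

Lemma mxtrace_compress : \tr (oproj Cs *m X) = e * \tr (oproj Cs).
Proof. by rewrite -{1}oproj_idem -mulmxA mxtrace_mulC compressX mxtraceZ. Qed.

Lemma dotmx_compress x : (x <= Cs)%MS -> '[x *m X, x] = e * '[x].
Proof.
move=> sxC; have xP : x *m oproj Cs = x by apply: proj_ortho_id.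
rewrite -{1 2}xP -dotmx_oprojl -(mulmxA (x *m oproj Cs)) -(mulmxA x).
by rewrite (mulmxA (oproj Cs)) compressX -scalemxAr xP linearZl.
Qed.
End CompressedOperator.

Section OrthonormalBasis.
Variables (C : numClosedFieldType) (n : nat) (w : 'I_n -> 'rV[C]_n).
Hypothesis w_orthonormal : forall k l, dotmx (w k) (w l) = (k == l)%:R.
Implicit Types (U : 'M[C]_n) (x : 'rV[C]_n).
Local Notation "''[' u , v ]" := (@dotmx C n u v) : ring_scope.
Local Notation "''[' u ]" := (@dotmx C n u u) : ring_scope.
Local Notation W := (\matrix_l w l).

Lemma basis_unitarymx : W \is unitarymx.
Proof. by apply/row_unitarymxP => k l; rewrite !rowK. Qed.

Lemma basis_adj_mulmx : W^t* *m W = 1%:M.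
Proof.
by rewrite -(invmx_unitary basis_unitarymx) mulVmx // unitarymx_unit // basis_unitarymx.
Qed.

Lemma basis_inj : injective w.
Proof.
move=> k l wkl; apply/eqP; have := w_orthonormal k l.
by rewrite wkl w_orthonormal eqxx; case: eqP => // _ /eqP; rewrite oner_eq0.
Qed.

Section Eigenbasis.
Variables (f : 'I_n -> 'I_n) (injf : injective f).

Lemma basis_expansion x : x = \sum_j '[x, w (f j)] *: w (f j).
Proof.
transitivity (\sum_l '[x, w l] *: w l); last exact: (reindex_inj injf).
rewrite -{1}[x]mulmx1 -basis_adj_mulmx mulmxA mulmx_sum_row; apply: eq_bigr => l _.
rewrite rowK dotmxE !mxE; congr (_ *: _); by apply: eq_bigr => k _; rewrite !mxE.
Qed.

Lemma dnorm_basis x : '[x] = \sum_j `|'[x, w (f j)]| ^+ 2.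
Proof.
rewrite {1}(basis_expansion x) linear_sumlz; apply: eq_bigr => j _.
by rewrite linearZl /= hermC /= expr0 mul1r normCK conjCK.
Qed.

Lemma mxtrace_basis N : \tr N = \sum_j '[w (f j) *m N, w (f j)].
Proof.
transitivity (\sum_l '[w l *m N, w l]); last exact: (reindex_inj injf).
have -> : \tr N = \tr (W *m N *m W^t*).
  by rewrite mxtrace_mulC mulmxA basis_adj_mulmx mul1mx.
apply: eq_bigr => l _; rewrite dotmxE !mxE; apply: eq_bigr => k _; rewrite !mxE.
by congr (_ * _); apply: eq_bigr => a _; rewrite !mxE.
Qed.

Variables (M : 'M[C]_n) (b : 'I_n -> C).
Hypothesis eigenM : forall j, w (f j) *m M = b j *: w (f j).

Lemma dotmx_eigenbasis x : '[x *m M, x] = \sum_j b j * `|'[x, w (f j)]| ^+ 2.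
Proof.
rewrite {1}(basis_expansion x) mulmx_suml linear_sumlz; apply: eq_bigr => j _.
rewrite -scalemxAl eigenM scalerA linearZl /= hermC /= expr0 mul1r normCK.
by rewrite conjCK mulrAC mulrC.
Qed.

(* The easy half of Courant-Fischer. *)
Lemma dotmx_eigen_le_tail (d : 'I_n) x :
  {homo b : j j' / (j <= j')%N >-> j' <= j} ->
  (forall j : 'I_n, (j < d)%N -> '[x, w (f j)] = 0) ->
  '[x *m M, x] <= b d * '[x].
Proof.
move=> b_anti x_tail; rewrite dotmx_eigenbasis dnorm_basis mulr_sumr.
apply: ler_sum => j _; case: (ltnP j d) => [/x_tail -> | ledj].
  by rewrite normr0 expr0n /= !mulr0.
by apply: ler_wpM2r; [apply: exprn_ge0 | apply: b_anti].
Qed.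

Lemma sum_eigen_le_mxtrace U u : (u <= U)%MS -> (forall j, 0 <= b j) ->
  \sum_j b j * `|'[u, w (f j)]| ^+ 2 <= '[u] * \tr (oproj U *m M).
Proof.
move=> suU b_ge0; rewrite mxtrace_mulC mxtrace_basis mulr_sumr.
apply: ler_sum => j _; rewrite mulmxA eigenM -scalemxAl linearZl /= dotmx_oproj.
rewrite [leRHS]mulrCA; apply: ler_wpM2l => //.
have -> : '[u, w (f j)] = '[u, w (f j) *m oproj U] by rewrite -dotmx_oprojl proj_ortho_id.
exact: (CauchySchwarz _ u _).1.
Qed.
End Eigenbasis.

Lemma mxtrace_oproj_ge0 U : 0 <= \tr (oproj U).
Proof.
rewrite (mxtrace_basis (@inj_id _)); apply: sumr_ge0 => l _.
by rewrite dotmx_oproj dnorm_ge0.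
Qed.

Lemma mxtrace_oproj_le U : \tr (oproj U) <= n%:R.
Proof.
rewrite (mxtrace_basis (@inj_id _)) -[n in n%:R]card_ord -sumr_const.
apply: ler_sum => l _; have := w_orthonormal l l; rewrite eqxx mulr1n => <-.
by rewrite dotmx_oproj; apply: dnorm_oproj_le.
Qed.
End OrthonormalBasis.

Lemma rspan_generator (C : numClosedFieldType) n m (A : 'I_m -> 'M[C]_n) i :
  rspan A (A i).
Proof.
exists 0, (fun k => (k == i)%:R); split; first exact: rpred0.
split; first by move=> k; apply: realn.
rewrite (bigD1 i) //= eqxx scale1r big1 ?addr0; first by rewrite raddf0 add0r.
by move=> k /negPf ->; rewrite scale0r.
Qed.

Lemma dotmx_adj (C : numClosedFieldType) n (u v : 'rV[C]_n) :
  dotmx u v = (u *m adj v) 0 0.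
Proof. by rewrite dotmxE. Qed.

Lemma ceildivS c m : (0 < m)%N -> ceildiv c.+1 m = (c %/ m).+1.
Proof.
move=> m_gt0; rewrite /ceildiv; have -> : (c.+1 + m.-1 = c + m)%N by lia.
by rewrite divnDr ?dvdnn // divnn m_gt0 addn1.
Qed.

Lemma coloring_nonempty (C : numClosedFieldType) n (S : 'M[C]_n) E K :
  S != 0 -> is_coloring S E K -> exists Cs, Cs \in K.
Proof.
case: K => [|Cs K] nz_S [_ sumK]; last by exists Cs; rewrite mem_head.
move: nz_S; rewrite -mxrank_eq0 -(proj_orthoE S).1 -[proj_ortho S]/(oproj S).
by rewrite -sumK big_nil mxrank0.
Qed.

Section TropicalSpectrum.
Variables (C : numClosedFieldType) (n m : nat) (A : 'I_m -> 'M[C]_n).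
Variables (w : 'I_n -> 'rV[C]_n) (sigma : 'I_m -> 'I_n -> 'I_n) (lam : 'I_m -> 'I_n -> C).
Hypotheses (n_gt1 : (1 < n)%N) (w_orthonormal : forall k l, dotmx (w k) (w l) = (k == l)%:R).
Hypotheses (sigma_inj : forall i, injective (sigma i))
  (eigenA : forall i j, w (sigma i j) *m A i = lam i j *: w (sigma i j))
  (lam_gap : forall i (j j' : 'I_n), j' = j.+1 :> nat ->
     0 < lam i j' /\ lam i j' < lam i j / (n ^ 2)%:R).
Local Notation "''[' u , v ]" := (@dotmx C n u v) : ring_scope.
Local Notation "''[' u ]" := (@dotmx C n u u) : ring_scope.

Lemma sqrn_gt0 : (0 : C) < (n ^ 2)%:R.
Proof. by rewrite ltr0n expn_gt0 (ltn_trans _ n_gt1). Qed.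

Lemma lam_gt0 i j : 0 < lam i j.
Proof.
have [j0 | j_gt0] := posnP j; last first.
  have j_pred : (j.-1 < n)%N by rewrite (leq_ltn_trans (leq_pred j)).
  by have [] := @lam_gap i (Ordinal j_pred) j (esym (prednK j_gt0)).
have j1 : nat_of_ord (Ordinal n_gt1) = j.+1 by rewrite j0.
have [lam1_gt0 lam1_lt] := @lam_gap i j (Ordinal n_gt1) j1.
by have := lt_trans lam1_gt0 lam1_lt; rewrite pmulr_lgt0 // invr_gt0 sqrn_gt0.
Qed.

Lemma lam_gap_mul i (j j' : 'I_n) : j' = j.+1 :> nat -> (n ^ 2)%:R * lam i j' <= lam i j.
Proof.
by move=> /(lam_gap i) [_]; rewrite ltr_pdivlMr ?sqrn_gt0 // mulrC => /ltW.
Qed.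

Lemma lam_anti i : {homo lam i : j j' / (j <= j')%N >-> j' <= j}.
Proof.
suff lam_anti_add k (j j' : 'I_n) : j' = (j + k)%N :> nat -> lam i j' <= lam i j.
  by move=> j j' le_jj'; apply: (lam_anti_add (j' - j)%N); rewrite subnKC.
elim: k j' => [|k IH] j' e.
  by have -> : j' = j by apply: val_inj => /=; rewrite e addn0.
have jk_lt : (j + k < n)%N by have := ltn_ord j'; lia.
have e' : j' = (Ordinal jk_lt).+1 :> nat by rewrite e addnS.
apply: le_trans (IH (Ordinal jk_lt) erefl); apply: le_trans (lam_gap_mul i e').
by rewrite ler_peMl ?(ltW (lam_gt0 _ _)) // ler1n expn_gt0 (ltnW n_gt1).
Qed.

Variables (S : 'M[C]_n) (K : seq 'M[C]_n).
Hypothesis colK : is_coloring S (induced_E S (rspan A)) K.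

Lemma code_mxtrace_le Cs (d : 'I_n) i : Cs \in K -> (d < \rank Cs)%N ->
  \tr (oproj Cs *m A i) <= lam i d * \tr (oproj Cs).
Proof.
move=> KCs ltdCs; have [sCS codeCs] := colK.1 Cs KCs.
have [e [_ /(compress_induced sCS) compressA]] :=
  codeCs _ (ex_intro _ (A i) (conj (rspan_generator A i) erefl)).
rewrite (mxtrace_compress compressA); apply: ler_wpM2r; first exact: mxtrace_oproj_ge0.
pose head k := w (sigma i (widen_ord (ltnW (ltn_ord d)) k)).
have [x [nz_x sxCs x_tail]] := exists_orthogonal_in head ltdCs.
rewrite -(ler_pM2r (dotmx_is_dotmx nz_x)) -(dotmx_compress compressA sxCs).
apply: dotmx_eigen_le_tail (eigenA i) _ _ (lam_anti i) _ => // j ltjd.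
have -> : j = widen_ord (ltnW (ltn_ord d)) (Ordinal ltjd) by apply: val_inj.
exact: x_tail.
Qed.

Definition weighted_trace (j : 'I_n) : C := \sum_i (lam i j)^-1 * \tr (oproj S *m A i).

Lemma weighted_trace_ub (d' d : 'I_n) : d = d'.+1 :> nat ->
  (forall Cs, Cs \in K -> (d < \rank Cs)%N) ->
  (n ^ 2)%:R * weighted_trace d' <= m%:R * n%:R.
Proof.
move=> dd' bigK; rewrite /weighted_trace mulr_sumr.
apply: (@le_trans _ _ (\sum_(i < m) \tr (oproj S))); last first.
  by rewrite sumr_const card_ord mulr_natl; apply/ler_wMn2r/(mxtrace_oproj_le w_orthonormal).
apply: ler_sum => i _; rewrite -colK.2 mulmx_suml !raddf_sum /= !mulr_sumr.
rewrite !big_seq; apply: ler_sum => Cs KCs.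
have mu_gt0 := lam_gt0 i d'.
apply: le_trans (_ : (n ^ 2)%:R * ((lam i d')^-1 * (lam i d * \tr (oproj Cs)))
                     <= \tr (oproj Cs)).
  rewrite ler_wpM2l ?ler0n // ler_wpM2l ?invr_ge0 ?(ltW mu_gt0) //.
  exact: code_mxtrace_le (bigK _ KCs).
rewrite mulrA mulrCA mulrA -[leRHS]mul1r ler_wpM2r ?(mxtrace_oproj_ge0 w_orthonormal) //.
by rewrite mulrA ler_pdivrMr // mul1r mulrC (lam_gap_mul i dd').
Qed.

Lemma weighted_trace_lb (d' : 'I_n) u : u != 0 -> (u <= S)%MS ->
  (forall l, '[u, w l] != 0 -> exists i (k : 'I_n), (k <= d')%N /\ l = sigma i k) ->
  1 <= weighted_trace d'.
Proof.
move=> nz_u suS cover; rewrite -(ler_pM2l (dotmx_is_dotmx nz_u)) mulr1.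
pose coef l := `|'[u, w l]| ^+ 2.
pose G i j l := (lam i d')^-1 * lam i j * coef l.
have G_ge0 i j l : 0 <= G i j l.
  by rewrite !mulr_ge0 ?exprn_ge0 ?invr_ge0 // ltW ?lam_gt0.
apply: (@le_trans _ _ (\sum_i \sum_j G i j (sigma i j))); last first.
  rewrite /weighted_trace mulr_sumr; apply: ler_sum => i _.
  rewrite /G /coef; under eq_bigr do rewrite -mulrA; rewrite -mulr_sumr mulrCA.
  rewrite ler_wpM2l ?invr_ge0 ?(ltW (lam_gt0 _ _)) //.
  exact: (sum_eigen_le_mxtrace w_orthonormal (@sigma_inj i) (eigenA i) suS
    (fun j => ltW (lam_gt0 i j))).
have regroup i : \sum_j G i j (sigma i j) = \sum_l \sum_(j | sigma i j == l) G i j l.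
  rewrite (partition_big (sigma i) predT) //; apply: eq_bigr => l _.
  by apply: eq_bigr => j /eqP ->.
rewrite (eq_bigr _ (fun i _ => regroup i)) exchange_big /= (dnorm_basis w_orthonormal (@inj_id _)).
apply: ler_sum => l _; have [ul0 | /cover [i [k [le_kd ->]]]] := eqVneq '[u, w l] 0.
  by rewrite ul0 normr0 expr0n /=; apply: sumr_ge0 => i _; apply: sumr_ge0.
rewrite (bigD1 i) //= (bigD1 k) //= -addrA ler_wpDr //.
  apply: addr_ge0; apply: sumr_ge0 => i0 _; first exact: G_ge0.
  by apply: sumr_ge0 => j _; apply: G_ge0.
rewrite /G /coef -[leLHS]mul1r ler_wpM2r ?exprn_ge0 //.
by rewrite mulrC ler_pdivlMr ?lam_gt0 // mul1r lam_anti.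
Qed.
End TropicalSpectrum.

Theorem lemma6 (C : numClosedFieldType) (n m : nat)
  (hn : (2 <= n)%N) (hm1 : (1 <= m)%N) (hm2 : (m <= n - 1)%N)
  (A : 'I_m -> 'M[C]_n)
  (hsa : forall X, rspan A X -> selfadj X)
  (hcomm : forall X Y, rspan A X -> rspan A Y -> X *m Y = Y *m X)
  (hind : rindep A)
  (w : 'I_n -> 'rV[C]_n)
  (hw : forall k l : 'I_n, w k *m adj (w l) = (k == l)%:R%:M :> 'M[C]_1)
  (sigma : 'I_m -> 'I_n -> 'I_n) (hsig : forall i, bijective (sigma i))
  (lam : 'I_m -> 'I_n -> C)
  (heig : forall i j, w (sigma i j) *m A i = lam i j *: w (sigma i j))
  (hord : forall i (j j' : 'I_n), nat_of_ord j' = j.+1 ->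
      0 < lam i j' /\ lam i j' < lam i j / (n ^ 2)%:R)
  (hcyc : forall (i i' : 'I_m) (j j' : 'I_n), nat_of_ord i' = i.+1 ->
      nat_of_ord j' = ((j + shift n m i) %% n)%N ->
      w (sigma i' j) = w (sigma i j'))
  (henum : forall l : 'I_n, exists (i : 'I_m) (k : 'I_n),
      nat_of_ord k = (l %/ m)%N /\ w l = w (sigma i k))
  (S : 'M[C]_n) (hS : S != 0)
  (K : seq 'M[C]_n) (hK : is_coloring S (induced_E S (rspan A)) K) :
  exists2 Cs, Cs \in K &
    (\rank Cs <= ceildiv (\rank (ocompl S)).+1 m)%N.
Proof.
have w_orthonormal k l : dotmx (w k) (w l) = (k == l)%:R.
  by rewrite dotmx_adj hw mxE eqxx mulr1n.
have sigma_inj i : injective (sigma i) := bij_inj (hsig i).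
set c := \rank (ocompl S); set d := ceildiv c.+1 m.
have [/hasP [Cs KCs small_Cs] | /hasPn big_codes] :=
  boolP (has (fun Cs => \rank Cs <= d)%N K); first by exists Cs.
have {}big_codes Cs : Cs \in K -> (d < \rank Cs)%N.
  by move=> /big_codes; rewrite ltnNge.
have [Cs0 KCs0] := coloring_nonempty hS hK.
have d_lt_n : (d < n)%N by apply: leq_trans (big_codes _ KCs0) (rank_leq_col _).
have dS : d = (c %/ m).+1 by apply: ceildivS.
have d'_lt_n : (c %/ m < n)%N by rewrite -ltnS -dS ltnW.
have := add_rank_ortho S; rewrite -/(ocompl S) -/c => rankS.
have [u [nz_u suS u_head]] : exists u, [/\ u != 0, (u <= S)%MS &
    forall l : 'I_n, (c < l)%N -> dotmx u (w l) = 0].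
  apply: exists_orthogonal_tail.
  by have := hS; rewrite -mxrank_eq0 -lt0n; lia.
have cover l : dotmx u (w l) != 0 ->
    exists i (k : 'I_n), (k <= Ordinal d'_lt_n)%N /\ l = sigma i k.
  move=> ul_nz; have [i [k [kE wl]]] := henum l; exists i, k.
  split; last exact: basis_inj w_orthonormal _ _ wl.
  by rewrite kE leq_div2r // leqNgt; apply: contra ul_nz => /u_head ->.
have lb := weighted_trace_lb hn w_orthonormal sigma_inj heig hord nz_u suS cover.
have ub := weighted_trace_ub hn w_orthonormal sigma_inj heig hord hK
  (d' := Ordinal d'_lt_n) (d := Ordinal d_lt_n) dS big_codes.
have := le_trans (ler_wpM2l (ler0n _ _) lb) ub.
rewrite mulr1 -natrM ler_nat; nia.
Qed.
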